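(* Assume Assumption 1 and that there are reals $\xi_i$, $i\in M$, with ${\bf A}^i=\xi_i{\bf I}$ for all $i\in M$. Assume $d^*=\min_{j\in N}D_{jj}$ is attained at the unique index $j_1$. Then the Shor relaxation (S) is exact, i.e. $v^\star=c^\star$, if there are no $\boldsymbol{\mu}\in\mathbb{R}^m$ and $x_{j_1},z_{j_1}\in\mathbb{R}$ satisfying: $d^*+\sum_{i\in M}\mu_i\xi_i=0$; $c_{j_1}+\sum_{i\in M}\mu_ia_{ij_1}=0$; for all $i\in M$: $\xi_iz_{j_1}+\sum_{j\ne j_1}\xi_i\Big(\frac{c_j+\sum_{l\in M}\mu_la_{lj}}{D_{jj}-d^*}\Big)^2+2a_{ij_1}x_{j_1}-2\sum_{j\ne j_1}a_{ij}\frac{c_j+\sum_{l\in M}\mu_la_{lj}}{D_{jj}-d^*}\le b_i$; $x_{j_1}^2\le z_{j_1}$; $\mu_i\ge 0$ for all $i\in M$.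
   Context: Let $N=\{1,\dots,n\}$ and $M=\{1,\dots,m\}$. Let ${\bf D}$ and ${\bf A}^i$ ($i\in M$) be real diagonal $n\times n$ matrices, ${\bf c},{\bf a}_i\in\mathbb{R}^n$ ($a_{ij}$ denotes the $j$-th entry of ${\bf a}_i$) and $b_i\in\mathbb{R}$. The diagonal QCQP is (P): $c^\star=\inf\{{\bf x}^\top{\bf D}{\bf x}+2{\bf c}^\top{\bf x} : {\bf x}^\top{\bf A}^i{\bf x}+2{\bf a}_i^\top{\bf x}\le b_i,\ i\in M\}$. Its Shor relaxation is (S): $v^\star=\inf\{{\bf D}\bullet{\bf X}+2{\bf c}^\top{\bf x} : {\bf A}^i\bullet{\bf X}+2{\bf a}_i^\top{\bf x}\le b_i\ (i\in M),\ {\bf X}-{\bf x}{\bf x}^\top\succeq {\bf O}\}$, where ${\bf P}\bullet{\bf Q}=\mathrm{trace}({\bf P}{\bf Q})$. Assumption 1: (i) the feasible region of (P) is nonempty; (ii) there exists $\bar{\bf y}\ge 0$ with $\sum_{i\in M}\bar y_i{\bf A}^i\succ{\bf O}$; (iii) the feasible region of (S) has nonempty interior. *)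

From HB Require Import structures.
From mathcomp Require Import all_boot all_order all_algebra.
From mathcomp Require Import all_classical all_reals.
From mathcomp Require Import ereal.
Set Implicit Arguments. Unset Strict Implicit. Unset Printing Implicit Defensive.
Import Order.TTheory GRing.Theory Num.Theory.
Local Open Scope ring_scope.

Section QCQP.
Variables (R : realType) (n m : nat).

Definition qform (P : 'M[R]_n) (u v : 'cV[R]_n) : R := (u^T *m P *m v) ord0 ord0.
Definition dotv (u v : 'cV[R]_n) : R := (u^T *m v) ord0 ord0.
Definition frob (P Q : 'M[R]_n) : R := \tr (P *m Q).

Definition psd (P : 'M[R]_n) : Prop := P^T = P /\ forall v : 'cV[R]_n, 0 <= qform P v v.
Definition pd (P : 'M[R]_n) : Prop :=
  P^T = P /\ forall v : 'cV[R]_n, v != 0 -> 0 < qform P v v.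

Variables (D : 'M[R]_n) (c : 'cV[R]_n)
          (A : 'I_m -> 'M[R]_n) (a : 'I_m -> 'cV[R]_n) (b : 'I_m -> R).

Definition P_feasible (x : 'cV[R]_n) : Prop :=
  forall i, qform (A i) x x + 2 * dotv (a i) x <= b i.
Definition P_obj (x : 'cV[R]_n) : R := qform D x x + 2 * dotv c x.
Definition cstar : \bar R := ereal_inf [set (P_obj x)%:E | x in P_feasible].

Definition S_feasible (x : 'cV[R]_n) (X : 'M[R]_n) : Prop :=
  X^T = X /\ (forall i, frob (A i) X + 2 * dotv (a i) x <= b i) /\ psd (X - x *m x^T).
Definition S_obj (x : 'cV[R]_n) (X : 'M[R]_n) : R := frob D X + 2 * dotv c x.
Definition vstar : \bar R :=
  ereal_inf [set (S_obj p.1 p.2)%:E | p in (fun p => S_feasible p.1 p.2)].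

Definition assumption1 : Prop :=
  (exists x, P_feasible x) /\
  (exists y : 'I_m -> R, (forall i, 0 <= y i) /\ pd (\sum_(i < m) y i *: A i)) /\
  (* (iii) nonempty interior of the feasible set of (S), in the space
     R^n x Sym_n, with the (entrywise) max-distance *)
  (exists (x0 : 'cV[R]_n) (X0 : 'M[R]_n) (eps : R), 0 < eps /\
     X0^T = X0 /\
     forall (x : 'cV[R]_n) (X : 'M[R]_n), X^T = X ->
       (forall j k, `|x j k - x0 j k| < eps) ->
       (forall j k, `|X j k - X0 j k| < eps) ->
       S_feasible x X).

End QCQP.

From HB Require Import structures.
From mathcomp Require Import all_boot all_order all_algebra.
From mathcomp Require Import all_classical all_reals all_analysis.
From mathcomp Require Import ereal.
From mathcomp Require Import ring lra.
Set Implicit Arguments. Unset Strict Implicit. Unset Printing Implicit Defensive.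
Import Order.TTheory GRing.Theory Num.Theory.
Import numFieldNormedType.Exports.
Local Open Scope classical_set_scope.
Local Open Scope ring_scope.

(* Since every A^i is scalar and D is diagonal, a feasible pair (x, X) of
   (S) only matters through x and z = tr X: it projects to a point (x, z)
   of the lifted problem
       minimise  sum_j (D_jj - d* ) x_j^2 + 2 c^T x + d* z
       subject to ||x||^2 <= z,  xi_i z + 2 a_i^T x <= b_i,
   whose value is at most that of (S), and whose points with ||x||^2 = z
   are points of (P) with the same value.  Assumption 1(ii) makes the lifted
   feasible set compact, so the lifted problem has a minimiser p.  If
   ||x||^2 < z at p, the only constraints active at p are affine; first-order
   optimality along feasible directions and Farkas' lemma then give KKT
   multipliers mu, which are exactly a solution of the system excluded by
   the hypothesis.  Hence ||x||^2 = z at p, and v* = c*. *)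

Section Farkas.
Variable R : realFieldType.

Definition dotr k (u v : 'rV[R]_k) : R := \sum_j u 0 j * v 0 j.

Lemma dotrDl k (u v w : 'rV[R]_k) : dotr (u + v) w = dotr u w + dotr v w.
Proof. by rewrite /dotr -big_split; apply: eq_bigr => j _; rewrite mxE mulrDl. Qed.

Lemma dotrDr k (u v w : 'rV[R]_k) : dotr w (u + v) = dotr w u + dotr w v.
Proof. by rewrite /dotr -big_split; apply: eq_bigr => j _; rewrite mxE mulrDr. Qed.

Lemma dotrZl k r (u w : 'rV[R]_k) : dotr (r *: u) w = r * dotr u w.
Proof. by rewrite /dotr mulr_sumr; apply: eq_bigr => j _; rewrite mxE mulrA. Qed.

Lemma dotrZr k r (u w : 'rV[R]_k) : dotr w (r *: u) = r * dotr w u.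
Proof. by rewrite /dotr mulr_sumr; apply: eq_bigr => j _; rewrite mxE mulrCA. Qed.

Lemma dotrNl k (u w : 'rV[R]_k) : dotr (- u) w = - dotr u w.
Proof. by rewrite -scaleN1r dotrZl mulN1r. Qed.

Lemma dotrBl k (u v w : 'rV[R]_k) : dotr (u - v) w = dotr u w - dotr v w.
Proof. by rewrite dotrDl dotrNl. Qed.

Lemma dotrBr k (u v w : 'rV[R]_k) : dotr w (u - v) = dotr w u - dotr w v.
Proof. by rewrite dotrDr -scaleN1r dotrZr mulN1r. Qed.

Lemma dotr_self_le0 k (w : 'rV[R]_k) : dotr w w <= 0 -> w = 0.
Proof.
move=> w_le0; have sq_ge0 j : 0 <= w 0 j * w 0 j by rewrite -expr2 sqr_ge0.
have /eqP : dotr w w = 0 by apply/eqP; rewrite eq_le w_le0 sumr_ge0.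
rewrite psumr_eq0 // => /allP w0; apply/rowP => j; rewrite mxE.
by apply/eqP; move: (w0 j (mem_index_enum _)); rewrite implyTb mulf_eq0 orbb.
Qed.

Lemma dotr_project k (r u e d : 'rV[R]_k) :
  dotr (r - (dotr r e / dotr u e) *: u) d =
  dotr r (d - (dotr u d / dotr u e) *: e).
Proof. by rewrite dotrBl dotrBr dotrZl dotrZr; congr (_ - _); ring. Qed.

Definition extend m (mu : 'I_m -> R) (r : R) (i : 'I_m.+1) : R :=
  if insub (val i) is Some j then mu j else r.

Lemma extend_ge0 m (mu : 'I_m -> R) r :
  (forall j, 0 <= mu j) -> 0 <= r -> forall i, 0 <= extend mu r i.
Proof. by move=> mu0 r0 i; rewrite /extend; case: insub. Qed.

Lemma sum_extend k m (mu : 'I_m -> R) r (v : 'I_m.+1 -> 'rV[R]_k) :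
  \sum_i extend mu r i *: v i =
  \sum_j mu j *: v (widen_ord (leqnSn m) j) + r *: v ord_max.
Proof.
rewrite big_ord_recr /= /extend insubF ?ltnn //; congr (_ + _).
by apply: eq_bigr => j _; rewrite valK.
Qed.

(* The induction eliminates the last generator by projecting the remaining
   ones along it, in a direction d0 where the system without it fails. *)
Lemma farkas k m (v : 'I_m -> 'rV[R]_k) (w : 'rV[R]_k) :
  (forall d, (forall i, dotr (v i) d <= 0) -> dotr w d <= 0) ->
  exists2 mu : 'I_m -> R, forall i, 0 <= mu i & w = \sum_i mu i *: v i.
Proof.
elim: m v w => [|m IH] v w Hvw.
  exists (fun _ => 0) => //; rewrite big_ord0.
  by apply: dotr_self_le0; apply: Hvw; case.
pose u := v ord_max; pose v' i := v (widen_ord (leqnSn m) i).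
have v_split d : (forall i, dotr (v' i) d <= 0) -> dotr u d <= 0 ->
    forall i, dotr (v i) d <= 0.
  move=> v'd ud i; case: (unliftP ord_max i) => [j ->|-> //].
  suff -> : lift ord_max j = widen_ord (leqnSn m) j by exact: v'd.
  exact/val_inj/lift_max.
have [Hv'w|] := pselect
  (forall d, (forall i, dotr (v' i) d <= 0) -> dotr w d <= 0).
  have [mu mu0 ->] := IH v' w Hv'w.
  by exists (extend mu 0); [exact: extend_ge0|rewrite sum_extend scale0r addr0].
move=> /existsNP[d0 /not_implyP[v'd0 not_wd0]].
have wd0 : 0 < dotr w d0 by rewrite ltNge; apply/negP.
have ud0 : 0 < dotr u d0.
  by rewrite ltNge; apply/negP => ud0; apply: not_wd0; apply: Hvw; exact: v_split.
pose proj r := r - (dotr r d0 / dotr u d0) *: u.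
have [lam lam0 w_proj] : exists2 lam : 'I_m -> R, forall i, 0 <= lam i &
    proj w = \sum_i lam i *: proj (v' i).
  apply: IH => d v'd; rewrite dotr_project; apply: Hvw; apply: v_split.
    by move=> i; rewrite -dotr_project; exact: v'd.
  by rewrite dotrBr dotrZr divfK ?gt_eqF // subrr.
pose r := (dotr w d0 - \sum_j lam j * dotr (v' j) d0) / dotr u d0.
exists (extend lam r).
  apply: extend_ge0 => //; apply: divr_ge0 (ltW ud0).
  rewrite subr_ge0 (le_trans _ (ltW wd0)) //.
  by apply: sumr_le0 => j _; rewrite mulr_ge0_le0.
rewrite sum_extend -/u (_ : w = proj w + (dotr w d0 / dotr u d0) *: u); last first.
  by rewrite addrNK.
rewrite w_proj /proj; under eq_bigr do rewrite scalerBr scalerA.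
rewrite sumrB -scaler_suml -addrA; congr (_ + _).
rewrite /r mulrBl scalerBl addrC; congr (_ - _ *: _).
by rewrite mulr_suml; apply: eq_bigr => j _; rewrite mulrA.
Qed.

End Farkas.

Lemma quadratic_eventually_neg (R : realFieldType) (al be ga : R) : al < 0 ->
  \forall t \near 0^'+, al + t * be + t ^+ 2 * ga < 0.
Proof.
move=> al0; have C0 : 0 < `|be| + `|ga| + 1 by rewrite ltr_wpDl // addr_ge0.
have e0 : 0 < - al / (`|be| + `|ga| + 1) by rewrite divr_gt0 ?oppr_gt0.
near=> t.
have t0 : 0 < t by near: t; exact: nbhs_right_gt.
have t1 : t <= 1 by near: t; exact: nbhs_right_le.
have tC : t * (`|be| + `|ga| + 1) <= - al.
  by rewrite -ler_pdivlMr //; near: t; exact: nbhs_right_le.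
have tbe : t * be <= t * `|be| := ler_wpM2l (ltW t0) (ler_norm _).
have tga : t ^+ 2 * ga <= t * `|ga|.
  rewrite expr2 -mulrA; apply: ler_wpM2l; first exact: ltW.
  apply: le_trans (ler_wpM2l (ltW t0) (ler_norm ga)) _.
  exact: ler_piMl (normr_ge0 ga) t1.
lra.
Unshelve. all: by end_near.
Qed.

Section RealContinuity.
Context {T : topologicalType} {R : realType}.
Implicit Types f g : T -> R.

Lemma continuous_add f g :
  continuous f -> continuous g -> continuous (fun x => f x + g x).
Proof. by move=> fc gc x; exact: (@continuousD R _ _ f g x (fc x) (gc x)). Qed.

Lemma continuous_sub f g :
  continuous f -> continuous g -> continuous (fun x => f x - g x).
Proof. by move=> fc gc x; exact: (@continuousB R _ _ f g x (fc x) (gc x)). Qed.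

Lemma continuous_mul f g :
  continuous f -> continuous g -> continuous (fun x => f x * g x).
Proof. by move=> fc gc x; exact: (@continuousM R _ f g x (fc x) (gc x)). Qed.

Lemma continuous_sum (I : finType) (F : I -> T -> R) :
  (forall i, continuous (F i)) -> continuous (fun x => \sum_i F i x).
Proof.
move=> Fc; suff sumc (s : seq I) : continuous (fun x => \sum_(i <- s) F i x).
  exact: sumc.
elim: s => [|i s IHs].
  rewrite (_ : (fun _ => _) = fun=> 0); first exact: cst_continuous.
  by apply: funext => x; rewrite big_nil.
rewrite (_ : (fun _ => _) = fun x => F i x + \sum_(j <- s) F j x); last first.
  by apply: funext => x; rewrite big_cons.
exact: continuous_add (Fc i) IHs.
Qed.

Lemma closed_le0 f :
  continuous f -> closed [set p | f p <= 0].
Proof.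
move=> fc; rewrite (_ : [set p | f p <= 0] = f @^-1` [set r | r <= 0]) //.
by apply: preimage_closed; [move=> p _; exact: fc|exact: closed_le].
Qed.

End RealContinuity.

Section LiftedProblem.
Variables (R : realType) (n m : nat).

(* Points of R^(n+1): the first n coordinates stand for x, the last one
   for the variable z that replaces the trace of X in the relaxation. *)
Definition xpart (p : 'rV[R]_n.+1) (j : 'I_n) : R := p 0 (widen_ord (leqnSn n) j).
Definition zpart (p : 'rV[R]_n.+1) : R := p 0 ord_max.
Definition mkpoint (x : 'I_n -> R) (z : R) : 'rV[R]_n.+1 :=
  \row_k (if insub (val k) is Some j then x j else z).

Lemma xpart_mkpoint x z j : xpart (mkpoint x z) j = x j.
Proof. by rewrite /xpart mxE /= valK. Qed.

Lemma zpart_mkpoint x z : zpart (mkpoint x z) = z.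
Proof. by rewrite /zpart mxE insubF //= ltnn. Qed.

Lemma dotr_mkpoint x z d :
  dotr (mkpoint x z) d = \sum_j x j * xpart d j + z * zpart d.
Proof.
rewrite /dotr big_ord_recr /=; congr (_ + _).
  by apply: eq_bigr => j _; rewrite -/(xpart (mkpoint x z) j) xpart_mkpoint.
by rewrite -/(zpart (mkpoint x z)) zpart_mkpoint.
Qed.

Lemma xpart_comb (I : finType) (mu : I -> R) (v : I -> 'rV[R]_n.+1) j :
  xpart (\sum_i mu i *: v i) j = \sum_i mu i * xpart (v i) j.
Proof. by rewrite /xpart summxE; apply: eq_bigr => i _; rewrite mxE. Qed.

Lemma zpart_comb (I : finType) (mu : I -> R) (v : I -> 'rV[R]_n.+1) :
  zpart (\sum_i mu i *: v i) = \sum_i mu i * zpart (v i).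
Proof. by rewrite /zpart summxE; apply: eq_bigr => i _; rewrite mxE. Qed.

Lemma xpartN p j : xpart (- p) j = - xpart p j.
Proof. by rewrite /xpart mxE. Qed.

Lemma zpartN p : zpart (- p) = - zpart p.
Proof. by rewrite /zpart mxE. Qed.

Lemma xpart_move p d t j : xpart (p + t *: d) j = xpart p j + t * xpart d j.
Proof. by rewrite /xpart !mxE. Qed.

Lemma zpart_move p d t : zpart (p + t *: d) = zpart p + t * zpart d.
Proof. by rewrite /zpart !mxE. Qed.

Lemma coord_cases (P : R -> Prop) p :
  (forall j, P (xpart p j)) -> P (zpart p) -> forall k, P (p 0 k).
Proof.
move=> Px Pz k; case: (unliftP ord_max k) => [j ->|-> //].
suff -> : lift ord_max j = widen_ord (leqnSn n) j by exact: Px.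
exact/val_inj/lift_max.
Qed.

Lemma continuous_xpart j : continuous (xpart^~ j).
Proof. exact: coord_continuous. Qed.

Lemma continuous_zpart : continuous zpart.
Proof. exact: coord_continuous. Qed.

Lemma continuous_xpart_sq j : continuous (fun p => xpart p j ^+ 2).
Proof.
rewrite (_ : (fun p => _) = fun p => xpart p j * xpart p j).
  by apply: continuous_mul; exact: continuous_xpart.
by apply: funext => p; rewrite expr2.
Qed.

Lemma continuous_xform (w : 'I_n -> R) : continuous (fun p => \sum_j w j * xpart p j).
Proof.
apply: continuous_sum => j /=.
by apply: continuous_mul; [exact: cst_continuous|exact: continuous_xpart].
Qed.

Lemma xform_move (w : 'I_n -> R) p d t :
  \sum_j w j * xpart (p + t *: d) j =
  \sum_j w j * xpart p j + t * \sum_j w j * xpart d j.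
Proof.
by rewrite mulr_sumr -big_split; apply: eq_bigr => j _ /=; rewrite xpart_move; ring.
Qed.

Variables (D : 'M[R]_n) (c : 'cV[R]_n) (a : 'I_m -> 'cV[R]_n) (b : 'I_m -> R)
  (xi : 'I_m -> R) (j1 : 'I_n).

Let dstar := D j1 j1.

(* The lifted problem: minimise lobj over lfeasible, where the constraint
   ||x||^2 <= z replaces X - x x^T >= 0 and z stands for tr X; dstar is d*. *)
Definition sqnorm p := \sum_j xpart p j ^+ 2.
Definition lcons i p := xi i * zpart p + 2 * \sum_j a i j 0 * xpart p j - b i.
Definition lobj p := \sum_j (D j j - dstar) * xpart p j ^+ 2
  + 2 * \sum_j c j 0 * xpart p j + dstar * zpart p.
Definition lfeasible p := sqnorm p <= zpart p /\ forall i, lcons i p <= 0.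
Definition lminimizer p := lfeasible p /\ forall q, lfeasible q -> lobj p <= lobj q.

Definition grad_cons i := mkpoint (fun j => 2 * a i j 0) (xi i).
Definition grad_obj p :=
  mkpoint (fun j => 2 * (D j j - dstar) * xpart p j + 2 * c j 0) dstar.

Lemma lcons_move i p d t :
  lcons i (p + t *: d) = lcons i p + t * dotr (grad_cons i) d.
Proof.
rewrite /lcons dotr_mkpoint zpart_move xform_move.
have -> : \sum_j 2 * a i j 0 * xpart d j = 2 * \sum_j a i j 0 * xpart d j.
  by rewrite mulr_sumr; apply: eq_bigr => j _; rewrite mulrA.
ring.
Qed.

Lemma lobj_move p d t : lobj (p + t *: d) =
  lobj p + t * dotr (grad_obj p) d + t ^+ 2 * \sum_j (D j j - dstar) * xpart d j ^+ 2.
Proof.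
rewrite /lobj dotr_mkpoint zpart_move xform_move.
have -> : \sum_j (D j j - dstar) * xpart (p + t *: d) j ^+ 2 =
    \sum_j (D j j - dstar) * xpart p j ^+ 2
    + t * \sum_j 2 * (D j j - dstar) * xpart p j * xpart d j
    + t ^+ 2 * \sum_j (D j j - dstar) * xpart d j ^+ 2.
  by rewrite !mulr_sumr -!big_split; apply: eq_bigr => j _ /=; rewrite xpart_move; ring.
have -> : \sum_j (2 * (D j j - dstar) * xpart p j + 2 * c j 0) * xpart d j =
    \sum_j 2 * (D j j - dstar) * xpart p j * xpart d j
    + 2 * \sum_j c j 0 * xpart d j.
  by rewrite mulr_sumr -big_split; apply: eq_bigr => j _ /=; ring.
ring.
Qed.

Lemma sqnorm_move p d t : sqnorm (p + t *: d) =
  sqnorm p + t * (2 * \sum_j xpart p j * xpart d j) + t ^+ 2 * sqnorm d.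
Proof.
rewrite /sqnorm !mulr_sumr -!big_split; apply: eq_bigr => j _ /=.
by rewrite xpart_move; ring.
Qed.

Lemma continuous_sqnorm : continuous sqnorm.
Proof. exact: continuous_sum continuous_xpart_sq. Qed.

Lemma continuous_lcons i : continuous (lcons i).
Proof.
apply: continuous_sub; last exact: cst_continuous.
apply: continuous_add; apply: continuous_mul; try exact: cst_continuous.
  exact: continuous_zpart.
exact: continuous_xform.
Qed.

Lemma continuous_lobj : continuous lobj.
Proof.
apply: continuous_add.
  apply: continuous_add; last first.
    by apply: continuous_mul; [exact: cst_continuous|exact: continuous_xform].
  apply: continuous_sum => j /=.
  by apply: continuous_mul; [exact: cst_continuous|exact: continuous_xpart_sq].
by apply: continuous_mul; [exact: cst_continuous|exact: continuous_zpart].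
Qed.

Lemma lfeasible_closed : closed lfeasible.
Proof.
have -> : lfeasible = [set p | sqnorm p - zpart p <= 0] `&`
    \bigcap_(i in setT) [set p | lcons i p <= 0].
  apply/seteqP; split=> p /=; rewrite subr_le0.
    by move=> [pn pc]; split=> // i _; exact: pc.
  by move=> [pn pc]; split=> // i; exact: pc.
apply: closedI; last apply: closed_bigI => i _.
  by apply/closed_le0/continuous_sub; [exact: continuous_sqnorm|exact: continuous_zpart].
exact/closed_le0/continuous_lcons.
Qed.

Lemma sqnorm_ge0 p : 0 <= sqnorm p.
Proof. by apply: sumr_ge0 => j _; exact: sqr_ge0. Qed.

Lemma xpart_sq_le_sqnorm p j : xpart p j ^+ 2 <= sqnorm p.
Proof.
by rewrite /sqnorm (bigD1 j) //= lerDl; apply: sumr_ge0 => k _; exact: sqr_ge0.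
Qed.

Lemma lcons_weighted (y : 'I_m -> R) p :
  \sum_i y i * lcons i p = (\sum_i y i * xi i) * zpart p
    + 2 * \sum_j (\sum_i y i * a i j 0) * xpart p j - \sum_i y i * b i.
Proof.
have -> : \sum_j (\sum_i y i * a i j 0) * xpart p j =
    \sum_i y i * \sum_j a i j 0 * xpart p j.
  under eq_bigr do rewrite mulr_suml; rewrite exchange_big /=.
  by apply: eq_bigr => i _; rewrite mulr_sumr; apply: eq_bigr => j _; rewrite mulrA.
rewrite mulr_suml mulr_sumr -big_split -sumrB; apply: eq_bigr => i _ /=.
by rewrite /lcons; ring.
Qed.

(* If some nonnegative combination of the xi is positive, the aggregated
   constraint together with ||x||^2 <= z bounds z on the lifted set. *)
Lemma lfeasible_zpart_bounded (y : 'I_m -> R) :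
  (forall i, 0 <= y i) -> 0 < \sum_i y i * xi i ->
  exists Z, forall p, lfeasible p -> zpart p <= Z.
Proof.
move=> y0; set s := \sum_i y i * xi i => s0.
pose al j := \sum_i y i * a i j 0; pose A2 := \sum_j al j ^+ 2.
exists (2 * (s * \sum_i y i * b i + 2 * A2) / s ^+ 2) => p [pn pc].
set T := \sum_j al j * xpart p j.
have agg : s * zpart p + 2 * T - \sum_i y i * b i <= 0.
  by rewrite -lcons_weighted; apply: sumr_le0 => i _; rewrite mulr_ge0_le0.
have cross : - (2 * s * T) <= 2 * A2 + s ^+ 2 / 2 * sqnorm p.
  rewrite /T /A2 /sqnorm [2 * s * _]mulr_sumr -sumrN [s ^+ 2 / 2 * _]mulr_sumr.
  rewrite [2 * \sum_j al j ^+ 2]mulr_sumr -big_split /=; apply: ler_sum => j _.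
  by have := sqr_ge0 (2 * al j + s * xpart p j); nra.
have agg_s : s * (s * zpart p + 2 * T - \sum_i y i * b i) <= 0 by rewrite pmulr_rle0.
have pn_s : s ^+ 2 * (sqnorm p - zpart p) <= 0.
  by apply: mulr_ge0_le0; [exact: sqr_ge0|rewrite subr_le0].
rewrite ler_pdivlMr ?exprn_gt0 //; lra.
Qed.

Lemma lfeasible_bounded (y : 'I_m -> R) :
  (forall i, 0 <= y i) -> 0 < \sum_i y i * xi i ->
  exists M, forall p, lfeasible p -> forall k, `|p 0 k| <= M.
Proof.
move=> y0 s0; have [Z HZ] := lfeasible_zpart_bounded y0 s0.
exists (Z + 1) => p pK; have zZ := HZ p pK; have [pn _] := pK.
have z0 : 0 <= zpart p := le_trans (sqnorm_ge0 p) pn.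
apply: (coord_cases (P := fun r => `|r| <= Z + 1)); last by rewrite ger0_norm //; lra.
move=> j; have xZ := le_trans (xpart_sq_le_sqnorm p j) (le_trans pn zZ).
have := sqr_ge0 (`|xpart p j| - 1); rewrite sqrrB1 real_normK ?num_real //; lra.
Qed.

Lemma lfeasible_compact (y : 'I_m -> R) :
  (forall i, 0 <= y i) -> 0 < \sum_i y i * xi i -> compact lfeasible.
Proof.
move=> y0 s0; have [M HM] := lfeasible_bounded y0 s0.
apply: (subclosed_compact lfeasible_closed
  (rV_compact (fun=> @segment_compact R (- M) M))).
by move=> p pK k /=; rewrite in_itv /= -ler_norml; exact: HM.
Qed.

Lemma lminimizer_exists (y : 'I_m -> R) :
  (forall i, 0 <= y i) -> 0 < \sum_i y i * xi i ->
  lfeasible !=set0 -> exists p, lminimizer p.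
Proof.
move=> y0 s0 K0; have [p pK pmin] := EVT_min_rV K0 (lfeasible_compact y0 s0)
  (continuous_subspaceT continuous_lobj).
by exists p; split; [rewrite inE in pK|move=> q qK; apply: pmin; rewrite inE].
Qed.

Lemma lfeasible_direction p d : lfeasible p -> sqnorm p < zpart p ->
  (forall i, lcons i p = 0 -> dotr (grad_cons i) d <= 0) ->
  \forall t \near 0^'+, lfeasible (p + t *: d).
Proof.
move=> [_ pc] slack dact.
have norm_ok : \forall t \near 0^'+, sqnorm (p + t *: d) <= zpart (p + t *: d).
  have : sqnorm p - zpart p < 0 by rewrite subr_lt0.
  move/(quadratic_eventually_neg (2 * \sum_j xpart p j * xpart d j - zpart d) (sqnorm d)).
  by apply: filterS => t; rewrite sqnorm_move zpart_move; lra.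
have cons_ok : \forall t \near 0^'+, forall i, lcons i (p + t *: d) <= 0.
  apply: filter_forall => i; have [act|inact] := eqVneq (lcons i p) 0.
    apply: filterS (nbhs_right_gt 0) => t t0.
    rewrite lcons_move act add0r; apply: mulr_ge0_le0; [exact: ltW|exact: dact].
  have : lcons i p < 0 by rewrite lt_neqAle inact pc.
  move/(quadratic_eventually_neg (dotr (grad_cons i) d) 0); apply: filterS => t.
  by rewrite lcons_move mulr0 addr0 => /ltW.
near=> t; split; near: t; [exact: norm_ok|exact: cons_ok].
Unshelve. all: by end_near.
Qed.

Lemma lminimizer_first_order p d : lminimizer p ->
  (\forall t \near 0^'+, lfeasible (p + t *: d)) -> 0 <= dotr (grad_obj p) d.
Proof.
move=> [_ pmin] dfeas; rewrite leNgt; apply/negP => desc.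
set Q := \sum_j (D j j - dstar) * xpart d j ^+ 2.
have : \forall t \near 0^'+,
    [/\ 0 < t, lfeasible (p + t *: d) & dotr (grad_obj p) d + t * Q < 0].
  near=> t; split.
  - by near: t; exact: nbhs_right_gt.
  - by near: t.
  - near: t; apply: filterS (quadratic_eventually_neg Q 0 desc) => t.
    by rewrite mulr0 addr0.
case/filter_ex => t [t0 tK tdesc].
have := pmin _ tK; rewrite lobj_move -/Q.
have : t * (dotr (grad_obj p) d + t * Q) < 0 by rewrite pmulr_rlt0.
nra.
Unshelve. all: by end_near.
Qed.

(* KKT conditions at a minimiser where the curved constraint is inactive,
   obtained from Farkas' lemma applied to the active constraints. *)
Lemma lminimizer_kkt p : lminimizer p -> sqnorm p < zpart p ->
  exists2 mu : 'I_m -> R, forall i, 0 <= mu i &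
    dstar + \sum_i mu i * xi i = 0 /\
    forall j, (D j j - dstar) * xpart p j + c j 0 + \sum_i mu i * a i j 0 = 0.
Proof.
move=> pmin slack; have [pK _] := pmin.
pose v i := if lcons i p == 0 then grad_cons i else 0.
have [mu mu0 grad_eq] : exists2 mu : 'I_m -> R, forall i, 0 <= mu i &
    - grad_obj p = \sum_i mu i *: v i.
  apply: farkas => d dv; rewrite dotrNl oppr_le0.
  apply: lminimizer_first_order pmin _; apply: lfeasible_direction pK slack _.
  by move=> i act; have := dv i; rewrite /v act eqxx.
pose mu' i := if lcons i p == 0 then mu i else 0.
have comb : - grad_obj p = \sum_i mu' i *: grad_cons i.
  rewrite grad_eq; apply: eq_bigr => i _; rewrite /v /mu'.
  by case: ifP; rewrite ?scaler0 ?scale0r.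
exists mu'; first by move=> i; rewrite /mu'; case: ifP.
split.
  have := congr1 zpart comb; rewrite zpartN zpart_comb /grad_obj zpart_mkpoint.
  by under eq_bigr do rewrite zpart_mkpoint; move=> <-; rewrite subrr.
move=> j; have := congr1 (xpart^~ j) comb; rewrite /= xpartN xpart_comb.
rewrite /grad_obj xpart_mkpoint (eq_bigr (fun i => mu' i * (2 * a i j 0))); last first.
  by move=> i _; rewrite xpart_mkpoint.
have -> : \sum_i mu' i * (2 * a i j 0) = 2 * \sum_i mu' i * a i j 0.
  by rewrite mulr_sumr; apply: eq_bigr => i _; rewrite mulrCA.
lra.
Qed.

End LiftedProblem.

Section MatrixForms.
Variables (R : realType) (n : nat).

Lemma dotvE (u x : 'cV[R]_n) : dotv u x = \sum_j u j 0 * x j 0.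
Proof. by rewrite /dotv mxE; apply: eq_bigr => j _; rewrite mxE. Qed.

Lemma qform_diag (P : 'M[R]_n) (x : 'cV[R]_n) : is_diag_mx P ->
  qform P x x = \sum_j P j j * x j 0 ^+ 2.
Proof.
move/is_diag_mxP => Pd; rewrite /qform mxE; apply: eq_bigr => k _.
rewrite mxE (bigD1 k) //= big1 ?addr0; last by move=> l lk; rewrite Pd ?mulr0.
by rewrite mxE expr2 mulrCA mulrA.
Qed.

Lemma qform_scalar (r : R) (x : 'cV[R]_n) :
  qform r%:M x x = r * \sum_j x j 0 ^+ 2.
Proof.
rewrite qform_diag ?scalar_mx_is_diag // mulr_sumr; apply: eq_bigr => j _.
by rewrite mxE eqxx mulr1n.
Qed.

Lemma frob_scalar (r : R) (X : 'M[R]_n) : frob r%:M X = r * \tr X.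
Proof. by rewrite /frob mul_scalar_mx mxtraceZ. Qed.

Lemma frob_diag (P X : 'M[R]_n) : is_diag_mx P -> frob P X = \sum_j P j j * X j j.
Proof.
move/is_diag_mxP => Pd; rewrite /frob /mxtrace; apply: eq_bigr => j _.
by rewrite mxE (bigD1 j) //= big1 ?addr0 // => l lj; rewrite Pd ?mul0r // eq_sym.
Qed.

Lemma qform_delta (P : 'M[R]_n) j : qform P (delta_mx j 0) (delta_mx j 0) = P j j.
Proof.
rewrite /qform mxE (bigD1 j) //= big1 ?addr0; last first.
  by move=> k kj; rewrite [X in _ * X]mxE (negbTE kj) mulr0.
rewrite !mxE !eqxx mulr1 (bigD1 j) //= big1 ?addr0; last first.
  by move=> k kj; rewrite !mxE (negbTE kj) mul0r.
by rewrite !mxE !eqxx mul1r.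
Qed.

Lemma frob_outer (P : 'M[R]_n) (x : 'cV[R]_n) : frob P (x *m x^T) = qform P x x.
Proof.
rewrite /frob /qform mulmxA mxtrace_mulC mulmxA /mxtrace big_ord1.
by congr (_ _ _); apply: val_inj.
Qed.

End MatrixForms.

Section ShorRelaxation.
Variables (R : realType) (n m : nat) (D : 'M[R]_n) (c : 'cV[R]_n)
  (A : 'I_m -> 'M[R]_n) (a : 'I_m -> 'cV[R]_n) (b : 'I_m -> R).

Lemma outer_S_feasible x : P_feasible A a b x -> S_feasible A a b x (x *m x^T).
Proof.
move=> Px; split; first by rewrite trmx_mul trmxK.
split; first by move=> i; rewrite frob_outer; exact: Px.
split; first by rewrite subrr trmx0.
by move=> v; rewrite subrr /qform mulmx0 mul0mx mxE.
Qed.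

Lemma vstar_le_cstar : (vstar D c A a b <= cstar D c A a b)%E.
Proof.
apply: le_ereal_inf_tmp => _ [x Px <-]; apply: ereal_inf_lbound.
by exists (x, x *m x^T); [exact: outer_S_feasible|rewrite /S_obj /P_obj frob_outer].
Qed.

Variables (xi : 'I_m -> R) (j1 : 'I_n).
Hypothesis A_scalar : forall i, A i = (xi i)%:M.

Definition S_lift (x : 'cV[R]_n) (X : 'M[R]_n) := mkpoint (fun j => x j 0) (\tr X).

Lemma S_lift_feasible x X : S_feasible A a b x X -> lfeasible a b xi (S_lift x X).
Proof.
move=> [_ [Sc [_ Spsd]]]; split.
  rewrite /sqnorm zpart_mkpoint /mxtrace; apply: ler_sum => j _.
  have := Spsd (delta_mx j 0); rewrite qform_delta !mxE big_ord1 !mxE.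
  by rewrite xpart_mkpoint subr_ge0 expr2.
move=> i; have := Sc i; rewrite A_scalar frob_scalar dotvE /lcons zpart_mkpoint.
by under [\sum_j _ * xpart _ _]eq_bigr do rewrite xpart_mkpoint; rewrite subr_le0.
Qed.

Hypothesis D_diag : is_diag_mx D.
Hypothesis j1_argmin : forall j : 'I_n, j != j1 -> D j1 j1 < D j j.

(* Since X - x x^T >= 0 and D - d* I >= 0 is diagonal, the lifted objective
   at (x, tr X) is at most the value of (S) at (x, X). *)
Lemma S_lift_obj x X : S_feasible A a b x X -> lobj D c j1 (S_lift x X) <= S_obj D c x X.
Proof.
move=> [_ [_ [_ Spsd]]].
have xX j : 0 <= X j j - x j 0 ^+ 2.
  by have := Spsd (delta_mx j 0); rewrite qform_delta !mxE big_ord1 !mxE expr2.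
rewrite /lobj /S_obj frob_diag // zpart_mkpoint dotvE /mxtrace.
under [\sum_j c j 0 * _]eq_bigr do rewrite xpart_mkpoint.
under [\sum_j (_ - _) * _]eq_bigr do rewrite xpart_mkpoint.
suff : \sum_j (D j j - D j1 j1) * x j 0 ^+ 2 + D j1 j1 * \sum_j X j j <=
  \sum_j D j j * X j j by lra.
rewrite mulr_sumr -big_split; apply: ler_sum => j _ /=.
have gap : 0 <= D j j - D j1 j1.
  by rewrite subr_ge0; have [->|/j1_argmin/ltW] := eqVneq j j1.
have := mulr_ge0 gap (xX j); lra.
Qed.

Lemma tight_P_feasible p : lfeasible a b xi p -> sqnorm p = zpart p ->
  P_feasible A a b (\col_j xpart p j) /\ P_obj D c (\col_j xpart p j) = lobj D c j1 p.
Proof.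
move=> [_ pc] tight.
have sq : \sum_j (\col_j xpart p j) j 0 ^+ 2 = zpart p.
  by rewrite -tight; apply: eq_bigr => j _; rewrite mxE.
have lin (u : 'cV[R]_n) : dotv u (\col_j xpart p j) = \sum_j u j 0 * xpart p j.
  by rewrite dotvE; apply: eq_bigr => j _; rewrite mxE.
split; first by move=> i; rewrite A_scalar qform_scalar sq lin -subr_le0; exact: pc.
rewrite /P_obj /lobj qform_diag // lin -tight /sqnorm.
have -> : \sum_j D j j * (\col_j xpart p j) j 0 ^+ 2 =
    \sum_j (D j j - D j1 j1) * xpart p j ^+ 2 + D j1 j1 * \sum_j xpart p j ^+ 2.
  by rewrite mulr_sumr -big_split; apply: eq_bigr => j _ /=; rewrite mxE; ring.
ring.
Qed.

Lemma shor_exact_at_tight_minimizer p :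
  lminimizer D c a b xi j1 p -> sqnorm p = zpart p -> vstar D c A a b = cstar D c A a b.
Proof.
move=> [pK pmin] tight; have [Px Pobj] := tight_P_feasible pK tight.
apply/eqP; rewrite eq_le vstar_le_cstar /=.
apply: le_ereal_inf_tmp => _ [[x X] /= SX <-].
apply: le_trans (_ : (P_obj D c (\col_j xpart p j))%:E <= _)%E.
  by apply: ereal_inf_lbound; exists (\col_j xpart p j).
rewrite lee_fin Pobj; apply: le_trans (S_lift_obj SX).
exact/pmin/S_lift_feasible.
Qed.

Definition certificate (mu : 'I_m -> R) (x1 z1 : R) : Prop :=
  let dstar := D j1 j1 in
  let w := fun j : 'I_n =>
    (c j ord0 + \sum_(l < m) mu l * a l j ord0) / (D j j - dstar) in
  [/\ dstar + \sum_(i < m) mu i * xi i = 0,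
      c j1 ord0 + \sum_(i < m) mu i * a i j1 ord0 = 0,
      (forall i : 'I_m,
         xi i * z1 + \sum_(j < n | j != j1) xi i * (w j) ^+ 2
         + 2 * a i j1 ord0 * x1
         - 2 * \sum_(j < n | j != j1) a i j ord0 * w j <= b i),
      x1 ^+ 2 <= z1
    & forall i : 'I_m, 0 <= mu i].

Lemma kkt_certificate p mu : lfeasible a b xi p -> (forall i, 0 <= mu i) ->
  D j1 j1 + \sum_i mu i * xi i = 0 ->
  (forall j, (D j j - D j1 j1) * xpart p j + c j 0 + \sum_i mu i * a i j 0 = 0) ->
  certificate mu (xpart p j1) (zpart p - \sum_(j < n | j != j1) xpart p j ^+ 2).
Proof.
move=> [pn pc] mu0 dual stat.
have ord0E : (0 : 'I_1) = ord0 by apply: val_inj.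
have w_opp j : j != j1 ->
    (c j ord0 + \sum_(l < m) mu l * a l j ord0) / (D j j - D j1 j1) = - xpart p j.
  move=> jj1; have gap : D j j - D j1 j1 != 0 by rewrite subr_eq0 gt_eqF ?j1_argmin.
  have -> : c j ord0 + \sum_(l < m) mu l * a l j ord0 =
      - (xpart p j * (D j j - D j1 j1)) by have := stat j; rewrite ord0E; lra.
  by rewrite mulNr mulfK.
have split_sq : sqnorm p = xpart p j1 ^+ 2 + \sum_(j < n | j != j1) xpart p j ^+ 2.
  by rewrite /sqnorm (bigD1 j1).
split => //.
- by have := stat j1; rewrite subrr mul0r add0r ord0E.
- move=> i; set z := \sum_(j < n | j != j1) xpart p j ^+ 2.
  rewrite (eq_bigr (fun j => xi i * xpart p j ^+ 2)); last first.
    by move=> j jj1 /=; rewrite w_opp // sqrrN.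
  rewrite [X in _ - 2 * X](eq_bigr (fun j => - (a i j ord0 * xpart p j))); last first.
    by move=> j jj1 /=; rewrite w_opp // mulrN.
  rewrite sumrN -mulr_sumr -/z.
  have := pc i; rewrite /lcons (bigD1 j1) //= ord0E; lra.
- lra.
Qed.
End ShorRelaxation.

Lemma scalar_weights_pos (R : realType) (n m : nat) (xi : 'I_m -> R)
    (A : 'I_m -> 'M[R]_n) (y : 'I_m -> R) (j1 : 'I_n) :
  (forall i, A i = (xi i)%:M) -> pd (\sum_i y i *: A i) -> 0 < \sum_i y i * xi i.
Proof.
move=> A_scalar [_ ypd].
have e1 : delta_mx j1 0 != 0 :> 'cV[R]_n.
  by apply/negP => /eqP/matrixP/(_ j1 0); rewrite !mxE !eqxx => /eqP; rewrite oner_eq0.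
move: (ypd _ e1); rewrite qform_delta summxE.
by under eq_bigr do rewrite A_scalar !mxE eqxx mulr1n.
Qed.

Theorem mainTheorem7 (R : realType) (n m : nat)
    (D : 'M[R]_n) (c : 'cV[R]_n)
    (A : 'I_m -> 'M[R]_n) (a : 'I_m -> 'cV[R]_n) (b : 'I_m -> R)
    (xi : 'I_m -> R) (j1 : 'I_n) :
  is_diag_mx D ->
  (forall i, A i = (xi i)%:M) ->
  assumption1 A a b ->
  (* d* = min_j D_jj is attained at the unique index j1 *)
  (forall j : 'I_n, j != j1 -> D j1 j1 < D j j) ->
  ~ (exists (mu : 'I_m -> R) (x1 z1 : R),
       let dstar := D j1 j1 in
       let w := fun j : 'I_n =>
         (c j ord0 + \sum_(l < m) mu l * a l j ord0) / (D j j - dstar) in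
       [/\ dstar + \sum_(i < m) mu i * xi i = 0,
           c j1 ord0 + \sum_(i < m) mu i * a i j1 ord0 = 0,
           (forall i : 'I_m,
              xi i * z1 + \sum_(j < n | j != j1) xi i * (w j) ^+ 2
              + 2 * a i j1 ord0 * x1
              - 2 * \sum_(j < n | j != j1) a i j ord0 * w j <= b i),
           x1 ^+ 2 <= z1
         & forall i : 'I_m, 0 <= mu i]) ->
  vstar D c A a b = cstar D c A a b.
Proof.
move=> D_diag A_scalar [[x0 Px0] [[y [y0 ypd]] _]] j1_argmin no_certificate.
have weights := scalar_weights_pos j1 A_scalar ypd.
have nonempty : lfeasible a b xi !=set0.
  exists (S_lift x0 (x0 *m x0^T)).
  exact/(S_lift_feasible A_scalar)/outer_S_feasible.
have [p pmin] := lminimizer_exists D c j1 y0 weights nonempty.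
suff tight : sqnorm p = zpart p.
  exact (shor_exact_at_tight_minimizer A_scalar D_diag j1_argmin pmin tight).
have [[pn _] _] := pmin; apply/eqP; rewrite eq_le pn leNgt; apply/negP => slack.
have [mu mu0 [dual stat]] := lminimizer_kkt pmin slack.
apply: no_certificate; exists mu, (xpart p j1).
exists (zpart p - \sum_(j < n | j != j1) xpart p j ^+ 2).
exact (kkt_certificate j1_argmin (proj1 pmin) mu0 dual stat).
Qed.
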